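(* Let $r,s,j$ be nonnegative integers with $j\le r$. Then $$X_+^{\,r+s-j}\,Y_+^{\,r-j}\,m_{1^j}(\mathbf{xy})\Big|_{\mathbf y=\mathbf x}=\sum_{j\le i\le r}\binom{i}{j}\binom{2(r-i)+s}{r-i}(r-j)!\,(r+s-j)!\;m_{2^i1^{2(r-i)+s}}(\mathbf x),$$ where $X_+=\sum_{i\ge1}(x_i-x_i^2\partial/\partial x_i)$, $Y_+=\sum_{i\ge1}(y_i-y_i^2\partial/\partial y_i)$ act on formal power series in $\mathbf x=(x_1,x_2,\dots)$, $\mathbf y=(y_1,y_2,\dots)$, and $m_{1^j}(\mathbf{xy})=\sum_{\beta\subset\mathbb N_{>0},|\beta|=j}\prod_{k\in\beta}x_ky_k$.
   Context: $m_\mu(\mathbf x)$ denotes the monomial symmetric function indexed by the partition $\mu$ (sum of all distinct monomials $x_{k_1}^{\mu_1}x_{k_2}^{\mu_2}\cdots$ with distinct indices); $2^i1^t$ is the partition with $i$ parts equal to $2$ and $t$ parts equal to $1$; $m_{1^0}=1$. *)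

From mathcomp Require Import all_boot all_algebra.
From mathcomp Require Import mpoly.
Set Implicit Arguments. Unset Strict Implicit. Unset Printing Implicit Defensive.
Import GRing.Theory.
Local Open Scope ring_scope.

(* The variables x_1..x_n, y_1..y_n are encoded as the 2n variables of
   {mpoly rat[n + n]}: x_k = 'X_(lshift n k), y_k = 'X_(rshift n k). *)

Definition xv (n : nat) (k : 'I_n) : {mpoly rat[n + n]} := 'X_(lshift n k).
Definition yv (n : nat) (k : 'I_n) : {mpoly rat[n + n]} := 'X_(rshift n k).

Definition Xplus (n : nat) (p : {mpoly rat[n + n]}) : {mpoly rat[n + n]} :=
  \sum_(i < n) (xv i * p - (xv i) ^+ 2 * p^`M(lshift n i)).

Definition Yplus (n : nat) (p : {mpoly rat[n + n]}) : {mpoly rat[n + n]} :=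
  \sum_(i < n) (yv i * p - (yv i) ^+ 2 * p^`M(rshift n i)).

Definition m1xy (n j : nat) : {mpoly rat[n + n]} :=
  \sum_(beta : {set 'I_n} | #|beta| == j) \prod_(k in beta) (xv k * yv k).

Definition diag_idx (n : nat) (k : 'I_(n + n)) : 'I_n :=
  match split k with inl i => i | inr i => i end.

Definition diag_subst (n : nat) : (n + n).-tuple {mpoly rat[n]} :=
  [tuple 'X_(diag_idx k) | k < n + n].

Definition eval_yx (n : nat) (p : {mpoly rat[n + n]}) : {mpoly rat[n]} :=
  p \mPo diag_subst n.

(* monomial symmetric function m_{2^i 1^t} in n variables: the sum of all
   distinct monomials having exactly i exponents equal to 2, exactly t
   exponents equal to 1, and all other exponents 0.  Such monomials are in
   bijection with exponent functions f : 'I_n -> {0,1,2} with these counts. *)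
Definition m21 (n i t : nat) : {mpoly rat[n]} :=
  \sum_(f : {ffun 'I_n -> 'I_3} |
          (#|[set k | val (f k) == 2%N]| == i) && (#|[set k | val (f k) == 1%N]| == t))
    \prod_(k < n) 'X_k ^+ val (f k).

(* The operator [X_+ = \sum_i x_i (1 - x_i d/dx_i)] sends a squarefree
   monomial [x_A] to [\sum_(i \notin A) x_(i |: A)], so [m] applications add
   an [m]-set to [A], each in [m`!] orders; the same holds for [Y_+].  Hence
   the left-hand side is [(r - j)`! (r + s - j)`!] times the sum of
   [x_(b :|: E) y_(b :|: D)] over [|b| = j], [|D| = r - j], [|E| = r + s - j]
   with [D] and [E] disjoint from [b].  At [y = x] such a triple gives the
   monomial with exponent 2 on a set [I2] and 1 on a set [I1] exactly when
   [b \subset I2], [D] and [E] both contain [I2 :\: b] and they split [I1];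
   counting these yields [C(|I2|, j) C(|I1|, r - |I2|)] when
   [|I1| = 2 (r - |I2|) + s], and no triple otherwise. *)

From mathcomp Require Import all_boot all_algebra mpoly zify.
Import GRing.Theory.
Local Open Scope ring_scope.

Lemma mderivXU (R : nzRingType) (N : nat) (i l : 'I_N) :
  ('X_i : {mpoly R[N]})^`M(l) = (i == l)%:R.
Proof.
rewrite mderivX mnm1E; case: eqVneq => [->|_]; last by rewrite scale0r.
have -> : (U_(l) - U_(l) = 0)%MM by apply/mnmP => k; rewrite !mnmE subnn.
by rewrite mpolyX0 scale1r.
Qed.

Lemma mderiv_prodX_eq0 (R : nzRingType) (N : nat) (I : finType) (S : {pred I})
    (g : I -> 'I_N) (l : 'I_N) :
  (forall k, k \in S -> g k != l) ->
  (\prod_(k in S) ('X_(g k) : {mpoly R[N]}))^`M(l) = 0.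
Proof.
move=> gSl; apply: (big_ind (fun q : {mpoly R[N]} => q^`M(l) = 0)).
- by rewrite -mpolyC1 mderivC.
- by move=> p q dp dq; rewrite mderivM dp dq mul0r mulr0 addr0.
- by move=> k kS; rewrite mderivXU (negbTE (gSl k kS)).
Qed.

(* [x - x^2 d/dx] kills [x] and multiplies anything free of [x] by [x]. *)
Lemma raising_prodX (R : comNzRingType) (N m : nat) (g : 'I_m -> 'I_N)
    (A : {set 'I_m}) (q : {mpoly R[N]}) :
  injective g -> (forall i, q^`M(g i) = 0) ->
  \sum_(i < m) ('X_(g i) * ((\prod_(k in A) 'X_(g k)) * q)
                - 'X_(g i) ^+ 2 * ((\prod_(k in A) 'X_(g k)) * q)^`M(g i))
  = \sum_(i | i \notin A) (\prod_(k in i |: A) 'X_(g k)) * q.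
Proof.
move=> g_inj dq; rewrite [RHS]big_mkcond /=; apply: eq_bigr => i _.
have [iA|iA] := boolP (i \in A); last first.
  rewrite mderivM dq mderiv_prodX_eq0 => [|k kA]; last first.
    by rewrite (inj_eq g_inj); apply: contraNneq iA => <-.
  by rewrite mul0r mulr0 addr0 mulr0 subr0 /= big_setU1 //= mulrA.
rewrite (big_setD1 i iA) /= -mulrA mderivM [(_ * q)^`M(_)]mderivM dq mulr0 addr0.
rewrite mderiv_prodX_eq0 => [|k]; last by rewrite !inE (inj_eq g_inj) => /andP[].
by rewrite mul0r mulr0 addr0 mderivXU eqxx mul1r expr2 mulrA subrr.
Qed.

Section XYOperators.
Variable n : nat.

Definition xprod (A : {set 'I_n}) : {mpoly rat[n + n]} := \prod_(k in A) xv k.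
Definition yprod (B : {set 'I_n}) : {mpoly rat[n + n]} := \prod_(k in B) yv k.

Lemma XplusD p q : @Xplus n (p + q) = @Xplus n p + @Xplus n q.
Proof.
rewrite /Xplus -big_split /=; apply: eq_bigr => i _.
by rewrite mderivD !mulrDr opprD addrACA.
Qed.

Lemma YplusD p q : @Yplus n (p + q) = @Yplus n p + @Yplus n q.
Proof.
rewrite /Yplus -big_split /=; apply: eq_bigr => i _.
by rewrite mderivD !mulrDr opprD addrACA.
Qed.

Lemma Xplus_xyprod A B :
  @Xplus n (xprod A * yprod B) = \sum_(i | i \notin A) xprod (i |: A) * yprod B.
Proof.
apply: raising_prodX; first exact: lshift_inj.
by move=> i; apply: mderiv_prodX_eq0 => k _; rewrite eq_rlshift.
Qed.

Lemma Yplus_xyprod A B :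
  @Yplus n (xprod A * yprod B) = \sum_(i | i \notin B) xprod A * yprod (i |: B).
Proof.
rewrite mulrC; under eq_bigr do rewrite mulrC.
apply: raising_prodX; first exact: rshift_inj.
by move=> i; apply: mderiv_prodX_eq0 => k _; rewrite eq_lrshift.
Qed.

End XYOperators.

Arguments xprod {n} A.
Arguments yprod {n} B.

Section AdditiveIteration.
Context {V : zmodType} {T : V -> V}.
Hypothesis TD : forall x y, T (x + y) = T x + T y.

Lemma additive0 : T 0 = 0.
Proof. by apply: (addrI (T 0)); rewrite -TD !addr0. Qed.

Lemma additive_sum (I : Type) (r : seq I) (P : pred I) (F : I -> V) :
  T (\sum_(i <- r | P i) F i) = \sum_(i <- r | P i) T (F i).
Proof. exact: (big_morph _ TD additive0). Qed.

Lemma additiveMn x k : T (x *+ k) = T x *+ k.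
Proof. by elim: k => [|k IH]; rewrite ?mulr0n ?additive0 // !mulrS TD IH. Qed.

Lemma iterD m x y : iter m T (x + y) = iter m T x + iter m T y.
Proof. by elim: m => //= m ->; rewrite TD. Qed.

Lemma iter_raise_set {I : finType} (F : {set I} -> V) :
  (forall A, T (F A) = \sum_(i | i \notin A) F (i |: A)) ->
  forall m A, iter m T (F A) =
    (\sum_(E : {set I} | (#|E| == m) && (E \subset ~: A)) F (A :|: E)) *+ m`!.
Proof.
move=> TF; elim=> [|m IH] A.
  rewrite mulr1n (big_pred1 set0) ?setU0 // => E /=.
  by rewrite cards_eq0; case: eqVneq => // ->; rewrite sub0set.
rewrite /= IH additiveMn additive_sum factS mulrnA; congr (_ *+ _).
rewrite -sumrMnl; under eq_bigr do rewrite TF.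
rewrite [RHS](eq_bigr (fun E : {set I} => \sum_(i in E) F (A :|: E))); last first.
  by move=> E /andP[/eqP <- _]; rewrite sumr_const.
rewrite !pair_big_dep /=.
rewrite [RHS](reindex_onto (fun p : {set I} * I => (p.2 |: p.1, p.2))
                      (fun p : {set I} * I => (p.1 :\ p.2, p.2))) /=; last first.
  by case=> E i /= /andP[_ iE]; rewrite setD1K.
apply: eq_big => [[E i]|[E i] _] /=; last by rewrite setUCA.
rewrite in_setU negb_or xpair_eqE eqxx andbT setU11 andbT subUset sub1set in_setC.
have [iE|iE] /= := boolP (i \in E).
  rewrite (setUidPr _) ?sub1set //.
  case: (E :\ i =P E) => [h|_]; last by rewrite !andbF.
  by have := setD11 i E; rewrite h iE.
rewrite setU1K // eqxx andbT cardsU1 iE add1n eqSS.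
by case: (#|E| == m); case: (E \subset ~: A); case: (i \notin A).
Qed.

End AdditiveIteration.

Section DiagonalSubstitution.
Variable n : nat.

Lemma diag_idx_lshift (k : 'I_n) : diag_idx (lshift n k) = k.
Proof.
rewrite /diag_idx; case: splitP => [i /= hi|i /= hi]; first exact: val_inj.
by have := ltn_ord k; rewrite hi ltnNge leq_addr.
Qed.

Lemma diag_idx_rshift (k : 'I_n) : diag_idx (rshift n k) = k.
Proof.
rewrite /diag_idx; case: splitP => [i /= hi|i /= hi].
  by have := ltn_ord i; rewrite -hi ltnNge leq_addr.
by apply: val_inj; apply/eqP; rewrite -(eqn_add2l n) -hi.
Qed.

Lemma eval_yx_xyprod (A B : {set 'I_n}) :
  @eval_yx n (xprod A * yprod B) = \prod_(k < n) 'X_k ^+ ((k \in A) + (k \in B))%N.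
Proof.
rewrite /eval_yx rmorphM /= /xprod /yprod !rmorph_prod /=.
under eq_bigr do rewrite /xv comp_mpolyXU -tnth_nth tnth_mktuple diag_idx_lshift.
under [X in _ * X]eq_bigr
  do rewrite /yv comp_mpolyXU -tnth_nth tnth_mktuple diag_idx_rshift.
rewrite !(big_mkcond (fun k => k \in _)) -big_split /=; apply: eq_bigr => k _.
by case: (k \in A); case: (k \in B); rewrite ?mulr1 ?mul1r ?expr0 ?expr1 // expr2.
Qed.

End DiagonalSubstitution.

Lemma fiber_counts_eqE (r s j c2 c1 cb ce : nat) :
  (j <= r -> cb <= c2 -> ce <= c1 ->
  [&& cb == j, c2 - cb + (c1 - ce) == r - j & c2 - cb + ce == r + s - j] =
  [&& (j <= c2 <= r) && (c1 == (r - c2).*2 + s), cb == j & ce == r + s - c2])%N.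
Proof.
move=> jr bc ec; apply/and3P/and3P =>
  [[/eqP ? /eqP ? /eqP ?]|[/andP[? /eqP ?] /eqP ? /eqP ?]].
  by split; [apply/andP; split; [apply/andP; split|apply/eqP]|apply/eqP|apply/eqP];
    lia.
by split; apply/eqP; lia.
Qed.

Section ExponentFiber.
Variable n : nat.
Local Notation triple := ({set 'I_n} * ({set 'I_n} * {set 'I_n}))%type.

(* In a triple [(b, (D, E))], [b] comes from [m1xy], [D] is the set raised
   by the [Y_+] and [E] the set raised by the [X_+]. *)
Definition admissible (r s j : nat) (t : triple) :=
  [&& #|t.1| == j, (#|t.2.1| == r - j) && (t.2.1 \subset ~: t.1)
    & (#|t.2.2| == r + s - j) && (t.2.2 \subset ~: t.1)]%N.

Definition diag_exponent (t : triple) : {ffun 'I_n -> 'I_3} :=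
  [ffun k => inord ((k \in t.1 :|: t.2.2) + (k \in t.1 :|: t.2.1))].

Lemma diag_exponentE t k :
  val (diag_exponent t k) = ((k \in t.1 :|: t.2.2) + (k \in t.1 :|: t.2.1))%N.
Proof. by rewrite ffunE /= inordK //; case: (_ \in _); case: (_ \in _). Qed.

Definition levelset (f : {ffun 'I_n -> 'I_3}) (v : nat) : {set 'I_n} :=
  [set k | val (f k) == v].

Variable f : {ffun 'I_n -> 'I_3}.
Local Notation I2 := (levelset f 2).
Local Notation I1 := (levelset f 1).

(* The fiber of [diag_exponent] over [f] is parametrized by [b \subset I2] and
   the part [e] of [I1] raised by [X_+]: the rest of [I1] is raised by [Y_+],
   and both operators raise all of [I2 :\: b]. *)
Definition triple_of_pair (p : {set 'I_n} * {set 'I_n}) : triple :=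
  (p.1, ((I2 :\: p.1) :|: (I1 :\: p.2), (I2 :\: p.1) :|: p.2)).

Lemma triple_of_pairK (b e : {set 'I_n}) :
  e \subset I1 -> (triple_of_pair (b, e)).2.2 :&: I1 = e.
Proof.
move=> /subsetP eI1; apply/setP => k; have /implyP := eI1 k; rewrite !inE.
by case: (f k) => [[|[|[|v]]] //]; case: (k \in b); case: (k \in e).
Qed.

Lemma diag_exponent_triple_of_pair (b e : {set 'I_n}) :
  b \subset I2 -> e \subset I1 -> diag_exponent (triple_of_pair (b, e)) = f.
Proof.
move=> /subsetP bI2 /subsetP eI1; apply/ffunP => k; apply/val_inj.
have /implyP := bI2 k; have /implyP := eI1 k; rewrite diag_exponentE /= !inE.
by case: (f k) => [[|[|[|v]]] //]; case: (k \in b); case: (k \in e).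
Qed.

Lemma diag_exponent_fiber (t : triple) :
  t.2.1 \subset ~: t.1 -> t.2.2 \subset ~: t.1 -> diag_exponent t = f ->
  t.1 \subset I2 /\ t = triple_of_pair (t.1, t.2.2 :&: I1).
Proof.
case: t => b [D E] /= /subsetP bD /subsetP bE tf.
have fk k : val (f k) = ((k \in b :|: E) + (k \in b :|: D))%N.
  by rewrite -tf diag_exponentE.
split; first by apply/subsetP => k kb; rewrite inE fk !inE kb.
congr (_, (_, _)); apply/setP => k;
  have /implyP := bD k; have /implyP := bE k; rewrite !inE fk !inE;
  by case: (k \in b); case: (k \in D); case: (k \in E).
Qed.

Lemma cardsU_levelsets (X Y : {set 'I_n}) :
  X \subset I2 -> Y \subset I1 -> #|X :|: Y| = (#|X| + #|Y|)%N.
Proof.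
move=> /subsetP XI2 /subsetP YI1; rewrite cardsU.
suff -> : X :&: Y = set0 by rewrite cards0 subn0.
apply/setP => k; rewrite !inE; apply/negbTE/andP => -[/XI2 + /YI1].
by rewrite !inE => /eqP ->.
Qed.

Lemma admissible_triple_of_pair (r s j : nat) (b e : {set 'I_n}) :
  b \subset I2 -> e \subset I1 ->
  admissible r s j (triple_of_pair (b, e)) =
  [&& #|b| == j, #|I2| - #|b| + (#|I1| - #|e|) == r - j
    & #|I2| - #|b| + #|e| == r + s - j]%N.
Proof.
move=> bI2 eI1.
have avoid_b (Y : {set 'I_n}) : Y \subset I1 -> (I2 :\: b) :|: Y \subset ~: b.
  move=> /subsetP YI1; apply/subsetP => k; rewrite !inE => /orP[/andP[] //|/YI1].
  by rewrite inE; apply: contraTN => /(subsetP bI2); rewrite inE => /eqP ->.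
rewrite /admissible /= !avoid_b ?subsetDl // !andbT.
by rewrite !cardsU_levelsets ?subsetDl // !cardsDS.
Qed.

Lemma fiber_admissible (r s j : nat) :
  [set t | admissible r s j t & diag_exponent t == f] =
  triple_of_pair @: [set p : {set 'I_n} * {set 'I_n} |
                       [&& p.1 \subset I2, p.2 \subset I1
                         & admissible r s j (triple_of_pair p)]].
Proof.
apply/setP => t; apply/idP/imsetP => [|[[b e]]].
  rewrite inE => /andP[tA /eqP tf]; have /and3P[_ /andP[_ bD] /andP[_ bE]] := tA.
  have [bI2 tP] := diag_exponent_fiber t bD bE tf.
  by exists (t.1, t.2.2 :&: I1); rewrite // inE /= bI2 subsetIr -tP tA.
rewrite inE /= => /and3P[bI2 eI1 pA] ->.
by rewrite inE pA diag_exponent_triple_of_pair ?eqxx.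
Qed.

Lemma card_fiber (r s j : nat) : (j <= r)%N ->
  #|[set t | admissible r s j t & diag_exponent t == f]| =
  (if (j <= #|I2| <= r) && (#|I1| == (r - #|I2|).*2 + s)
   then 'C(#|I2|, j) * 'C(#|I1|, r - #|I2|) else 0)%N.
Proof.
move=> jr; rewrite fiber_admissible card_in_imset => [|[b e] [b' e']]; last first.
  rewrite !inE /= => /and3P[_ eI1 _] /and3P[_ e'I1 _] same.
  congr pair; first by case: same.
  by rewrite -(triple_of_pairK b e eI1) -(triple_of_pairK b' e' e'I1) same.
set cond := (_ && _).
have memE b e :
  ((b, e) \in [set p : {set 'I_n} * {set 'I_n} |
                 [&& p.1 \subset I2, p.2 \subset I1
                   & admissible r s j (triple_of_pair p)]]) =
  [&& cond, (b \subset I2) && (#|b| == j)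
    & (e \subset I1) && (#|e| == r + s - #|I2|)%N].
  rewrite inE /=; have [bI2|] := boolP (b \subset I2); last by rewrite !andbF.
  have [eI1|] := boolP (e \subset I1); last by rewrite !andbF.
  rewrite admissible_triple_of_pair // fiber_counts_eqE ?subset_leq_card //.
case: ifP => condT.
  have -> : 'C(#|I1|, r - #|I2|) = 'C(#|I1|, r + s - #|I2|).
    move: condT => /andP[/andP[_ I2r] /eqP ->].
    by rewrite -bin_sub; [congr 'C(_, _)|]; lia.
  rewrite -!cards_draws -cardsX; apply: eq_card => -[b e].
  by rewrite memE condT in_setX !inE.
apply/eqP; rewrite cards_eq0; apply/eqP/setP => -[b e].
by rewrite memE condT inE.
Qed.

End ExponentFiber.

Arguments admissible {n} r s j t.
Arguments diag_exponent {n} t.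
Arguments levelset {n} f v.

Section MonomialExpansion.
Variable n : nat.

Definition exp_monomial (f : {ffun 'I_n -> 'I_3}) : {mpoly rat[n]} :=
  \prod_(k < n) 'X_k ^+ val (f k).

Lemma m1xy_xyprod j : m1xy n j = \sum_(b : {set 'I_n} | #|b| == j) xprod b * yprod b.
Proof. by apply: eq_bigr => b _; rewrite big_split. Qed.

Lemma iter_XY_m1xy r s j :
  iter (r + s - j) (@Xplus n) (iter (r - j) (@Yplus n) (m1xy n j)) =
  (\sum_(t | admissible r s j t) xprod (t.1 :|: t.2.2) * yprod (t.1 :|: t.2.1))
    *+ ((r - j)`! * (r + s - j)`!).
Proof.
have iterXD := iterD (@XplusD n); have iterYD := iterD (@YplusD n).
rewrite m1xy_xyprod (additive_sum (iterYD _)) (additive_sum (iterXD _)).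
under eq_bigr => b _.
  rewrite (iter_raise_set (@YplusD n) (fun B => xprod b * yprod B)
             (@Yplus_xyprod n b)).
  rewrite (additiveMn (iterXD _)) (additive_sum (iterXD _)).
  under eq_bigr => D _.
    rewrite (iter_raise_set (@XplusD n) (fun A => xprod A * yprod (b :|: D))
               (fun A => @Xplus_xyprod n A (b :|: D))).
    over.
  rewrite sumrMnl -mulrnA mulnC.
  over.
rewrite /= sumrMnl; congr (_ *+ _).
by under [LHS]eq_bigr do rewrite pair_big_dep; rewrite pair_big_dep.
Qed.

Lemma eval_yx_iter_XY_m1xy r s j :
  eval_yx (iter (r + s - j) (@Xplus n) (iter (r - j) (@Yplus n) (m1xy n j))) =
  (\sum_(t | admissible r s j t) exp_monomial (diag_exponent t))
    *+ ((r - j)`! * (r + s - j)`!).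
Proof.
rewrite iter_XY_m1xy /eval_yx raddfMn raddf_sum; congr (_ *+ _).
apply: eq_bigr => t _; apply: (etrans (eval_yx_xyprod _ _ _)).
by apply: eq_bigr => k _; rewrite diag_exponentE.
Qed.

Lemma sum_m21 (lo hi : nat) (c t : nat -> nat) :
  \sum_(lo <= i < hi) (c i)%:R * m21 n i (t i) =
  \sum_f (if (lo <= #|levelset f 2| < hi)%N
             && (#|levelset f 1| == t #|levelset f 2|)
          then c #|levelset f 2| else 0%N)%:R * exp_monomial f.
Proof.
rewrite /m21; under eq_bigr do rewrite mulr_sumr big_mkcond.
rewrite exchange_big; apply: eq_bigr => f _ /=.
set a := #|levelset f 2|.
rewrite (eq_bigr (fun i => if i == a then
    (if #|levelset f 1| == t i then (c i)%:R * exp_monomial f else 0) else 0));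
  last by move=> i _; rewrite eq_sym; case: eqP.
rewrite -big_mkcond big_nat1_eq.
by case: (lo <= a < hi)%N; case: (_ == _); rewrite ?mul0r.
Qed.

End MonomialExpansion.

Arguments exp_monomial {n} f.

Theorem mainTheorem6 (n r s j : nat) (hjr : (j <= r)%N) :
  eval_yx (iter (r + s - j) (@Xplus n) (iter (r - j) (@Yplus n) (m1xy n j)))
  = \sum_(j <= i < r.+1)
      (('C(i, j) * 'C((r - i).*2 + s, r - i) * (r - j)`! * (r + s - j)`!)%:R
         * m21 n i ((r - i).*2 + s)).
Proof.
rewrite eval_yx_iter_XY_m1xy (partition_big diag_exponent predT) //=.
rewrite sum_m21 -sumrMnl; apply: eq_bigr => f _.
rewrite (eq_bigr (fun _ => exp_monomial f)) => [|t /andP[_ /eqP ->]] //.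
rewrite sumr_const -cardsE card_fiber // ltnS -mulrnA mulr_natl.
by congr (_ *+ _); case: ifP => [/andP[_ /eqP <-]|]; rewrite ?mul0n ?mulnA.
Qed.
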